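(* Let $T$ be a rooted tree with root $r$ in which every node $u$ carries a positive integer $w(u)$ such that $w(u)\ge\sum_{v\in C(u)} w(v)$ for every node $u$, where $C(u)$ is the set of children of $u$. For an internal node $u$ with at least two children, let $\mathrm{SecW}(u)$ denote the second largest value in the multiset $\{w(v): v\in C(u)\}$, and let $\mathrm{SecW}(u)=0$ if $u$ has fewer than two children. Let $x>0$ and let $A$ be the set of nodes $u$ of $T$ with $\mathrm{SecW}(u)>x$. Then $|A| < w(r)/x$. *)

(* A rooted tree is a finite rose tree: a node carries its
   weight w(u) : nat and the (finite) list of its child subtrees. *)
From mathcomp Require Import all_boot all_order all_algebra.
Set Implicit Arguments. Unset Strict Implicit. Unset Printing Implicit Defensive.

Inductive wtree := Node of nat & seq wtree.

Definition wroot (t : wtree) : nat := let: Node w _ := t in w.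

Fixpoint wf_wtree (t : wtree) : bool :=
  let: Node w cs := t in
  [&& 0 < w, sumn (map wroot cs) <= w & all wf_wtree cs].

Definition secW (cs : seq wtree) : nat :=
  if 2 <= size cs then nth 0 (sort geq (map wroot cs)) 1 else 0.

(* number of nodes u of t (counted as positions in the tree) satisfying P
   applied to (w(u), children of u) *)
Fixpoint count_nodes (P : nat -> seq wtree -> bool) (t : wtree) : nat :=
  let: Node w cs := t in P w cs + sumn (map (count_nodes P) cs).

(* Call a subtree heavy if it contains a node of A or its root weight exceeds
   x.  By induction, (#A-nodes of t + [t heavy]) * x <= w(t): a node of A has
   at least two children of weight > x, and any other node with an A-node
   below it has at least one heavy child, so in both cases the extra unit
   needed at the node is paid for by its children. *)
From mathcomp Require Import all_boot all_order all_algebra.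
From mathcomp Require Import zify.
Set Implicit Arguments. Unset Strict Implicit. Unset Printing Implicit Defensive.
Import Order.TTheory GRing.Theory Num.Theory.
Local Open Scope ring_scope.

Lemma wtree_ind_all (P : pred wtree) :
  (forall w cs, all P cs -> P (Node w cs)) -> forall t, P t.
Proof.
move=> IHnode; fix IH 1; case=> w cs; apply: IHnode.
by elim: cs => //= c cs ->; rewrite IH.
Qed.

Lemma two_le_count_secW (p : pred nat) cs :
  (forall a b, (a <= b)%N -> p a -> p b) -> ~~ p 0%N -> p (secW cs) ->
  (2 <= count (fun c => p (wroot c)) cs)%N.
Proof.
move=> p_up p0; rewrite /secW; case: ifP => [size_cs|_ p0']; last by rewrite p0' in p0.
have ws_perm : perm_eq (sort geq (map wroot cs)) (map wroot cs) by rewrite perm_sort.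
have ws_sorted : sorted geq (sort geq (map wroot cs)).
  by apply: sort_sorted => a b; exact: leq_total.
rewrite -(count_map wroot p) -(permP ws_perm).
have : (2 <= size (sort geq (map wroot cs)))%N by rewrite size_sort size_map.
move: ws_sorted; case: (sort geq _) => [|a [|b s]] //= /andP[ba _] _ pb.
by rewrite pb (p_up _ _ ba pb).
Qed.

Section HeavyBound.
Variables (R : realFieldType) (x : R).
Hypothesis x_gt0 : 0 < x.

Definition count_secW_gt (t : wtree) : nat :=
  count_nodes (fun _ cs => x < (secW cs)%:R) t.

Lemma count_secW_gt_Node w cs :
  count_secW_gt (Node w cs) = ((x < (secW cs)%:R)%R + sumn (map count_secW_gt cs))%N.
Proof. by []. Qed.

Definition heavy (t : wtree) : bool := (0 < count_secW_gt t)%N || (x < (wroot t)%:R).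

Lemma count_heavy_secW cs : x < (secW cs)%:R -> (2 <= count heavy cs)%N.
Proof.
move=> x_lt_secW.
have big_heavy : subpred (fun c => x < (wroot c)%:R) heavy.
  by move=> c /= x_lt; rewrite /heavy x_lt orbT.
apply: leq_trans (sub_count big_heavy cs).
apply: (@two_le_count_secW (fun a : nat => x < a%:R)) => //.
- by move=> a b ab /lt_le_trans; apply; rewrite ler_nat.
- by rewrite -leNgt; exact: ltW.
Qed.

Lemma count_heavy_gt0 cs :
  (0 < sumn (map count_secW_gt cs))%N -> (0 < count heavy cs)%N.
Proof.
elim: cs => //= c cs IH; case: (posnP (count_secW_gt c)) => [-> /IH | c_gt0 _].
  by move=> ?; rewrite ltn_addl.
by have -> : heavy c by rewrite /heavy c_gt0.
Qed.

Lemma count_secW_gt_Node_lt w cs : (0 < count_secW_gt (Node w cs))%N ->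
  (count_secW_gt (Node w cs) < sumn (map count_secW_gt cs) + count heavy cs)%N.
Proof.
rewrite count_secW_gt_Node.
case: (boolP (x < (secW cs)%:R)) => [/count_heavy_secW two_heavy | _] /=.
  by lia.
by rewrite add0n => /count_heavy_gt0; lia.
Qed.

Lemma sumn_children_bound cs :
  all (fun c => (count_secW_gt c + heavy c)%:R * x <= (wroot c)%:R) cs ->
  (sumn (map count_secW_gt cs) + count heavy cs)%:R * x <= (sumn (map wroot cs))%:R.
Proof.
elim: cs => [|c cs IH] /=; first by rewrite mul0r.
case/andP=> bound_c /IH bound_cs.
rewrite addnACA natrD mulrDl (natrD _ (wroot c)).
exact: lerD.
Qed.

Lemma count_secW_gt_heavy_bound t :
  wf_wtree t -> (count_secW_gt t + heavy t)%:R * x <= (wroot t)%:R.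
Proof.
suff /(_ t)/implyP : forall t, wf_wtree t ==>
  ((count_secW_gt t + heavy t)%:R * x <= (wroot t)%:R) by [].
apply: wtree_ind_all => w cs IH.
apply/implyP => /and3P[_ sum_le_w wf_cs].
have children :
    (sumn (map count_secW_gt cs) + count heavy cs)%:R * x <= (sumn (map wroot cs))%:R.
  apply: sumn_children_bound.
  move: (conj IH wf_cs) => /andP; rewrite -all_predI.
  by apply: sub_all => c /andP[/implyP].
case: (posnP (count_secW_gt (Node w cs))) => [A_empty|A_nonempty].
  rewrite /heavy A_empty /=.
  by case: (boolP (x < w%:R)) => [/ltW|_]; rewrite ?mul1r ?mul0r.
apply: le_trans (le_trans children _); last by rewrite ler_nat.
have -> : heavy (Node w cs) by rewrite /heavy A_nonempty.
by rewrite ler_pM2r // ler_nat addn1 count_secW_gt_Node_lt.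
Qed.

End HeavyBound.

Theorem lemma3 (R : realFieldType) (T : wtree) (x : R) :
  wf_wtree T -> 0 < x ->
  (count_nodes (fun _ cs => x < (secW cs)%:R) T)%:R < (wroot T)%:R / x.
Proof.
move=> wf_T x_gt0; rewrite -/(count_secW_gt x T) ltr_pdivlMr //.
have bound := count_secW_gt_heavy_bound x_gt0 wf_T.
case: (posnP (count_secW_gt x T)) => [-> | A_nonempty].
  by rewrite mul0r ltr0n; case: T wf_T {bound} => w cs /and3P[].
have heavy_T : heavy x T by rewrite /heavy A_nonempty.
by apply: lt_le_trans bound; rewrite heavy_T addn1 ltr_pM2r // ltr_nat.
Qed.
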